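(* For every $n\ge1$, $$\sum_{\deg\tau=n}\frac{B_\tau}{\tau!}=\frac{(-1)^{n+1}}{n},$$ where the sum runs over all non-associative monomials $\tau$ in one variable $x$ of degree $n$ (equivalently, rooted binary plane trees with $n$ leaves).
   Context: Bernoulli numbers $B_k$ are defined by $B_0=1$ and $\sum_{k=0}^{n-1}\frac{B_k}{k!(n-k)!}=0$ for $n\ge2$ (so $B_1=-1/2$). For a non-associative monomial $\tau$ in $x$: if $\tau=x$ set $B_\tau=1$, $\tau!=1$; otherwise $\tau$ can be written uniquely as $(\cdots((x\tau_1)\tau_2)\cdots)\tau_k$ with $k\ge1$ and monomials $\tau_1,\dots,\tau_k$, and one sets $B_\tau=B_k B_{\tau_1}\cdots B_{\tau_k}$ and $\tau!=k!\,\tau_1!\cdots\tau_k!$. The degree of $\tau$ is the number of occurrences of $x$. *)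

From HB Require Import structures.
From mathcomp Require Import all_boot all_order all_algebra.
Set Implicit Arguments. Unset Strict Implicit. Unset Printing Implicit Defensive.
Import Order.TTheory GRing.Theory Num.Theory.

(* Non-associative monomials in one variable x = rooted binary plane trees.
   Leaf is x, Node a b is the product (a b). *)
Inductive tree : Type := Leaf | Node of tree & tree.

Fixpoint tree_eqb (s t : tree) : bool :=
  match s, t with
  | Leaf, Leaf => true
  | Node a b, Node c d => tree_eqb a c && tree_eqb b d
  | _, _ => false
  end.

Lemma tree_eqP : Equality.axiom tree_eqb.
Proof.
elim=> [|a IHa b IHb] [|c d] /=; try by constructor.
by apply: (iffP andP) => [[/IHa -> /IHb ->]|[<- <-]]; split; [apply/IHa|apply/IHb].
Qed.

HB.instance Definition _ := hasDecEq.Build tree tree_eqP.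

Fixpoint deg (t : tree) : nat :=
  match t with Leaf => 1 | Node a b => deg a + deg b end.

(* Left-spine decomposition: tau = (...((x tau_1) tau_2)...) tau_k.
   spine tau = [:: tau_1; ...; tau_k] (empty for tau = x). *)
Fixpoint spine (t : tree) : seq tree :=
  match t with Leaf => [::] | Node a b => rcons (spine a) b end.

(* info t = (k, prod_i B_{tau_i}, prod_i tau_i!) where k = size (spine t),
   given the Bernoulli sequence B.  Computed structurally. *)
Fixpoint info (B : nat -> rat) (t : tree) : nat * rat * nat :=
  match t with
  | Leaf => (0%N, 1%R, 1%N)
  | Node a b =>
      let '(k, p, f) := info B a in
      let '(k', p', f') := info B b in
      (k.+1, (p * (B k' * p'))%R, (f * (k'`! * f'))%N)
  end.

(* B_tau = B_k * B_{tau_1} ... B_{tau_k};  for tau = x this is B_0 = 1. *)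
Definition Btau (B : nat -> rat) (t : tree) : rat :=
  let '(k, p, _) := info B t in (B k * p)%R.

(* tau! = k! * tau_1! ... tau_k!;  for tau = x this is 0! = 1. *)
Definition tfact (t : tree) : nat :=
  let '(k, _, f) := info (fun _ => 0%R) t in (k`! * f)%N.

Fixpoint trees (fuel : nat) : seq tree :=
  match fuel with
  | 0 => [::]
  | f.+1 => Leaf :: [seq Node l r | l <- trees f, r <- trees f]
  end.

(* All non-associative monomials of degree n (height <= degree). *)
Definition trees_of_deg (n : nat) : seq tree :=
  [seq t <- undup (trees n) | deg t == n].

Example trees_of_deg_sizes :
  map (fun n => size (trees_of_deg n)) (iota 1 5) = [:: 1; 1; 2; 5; 14]%N.
Proof. by vm_compute. Qed.

From HB Require Import structures.
From mathcomp Require Import all_boot all_order all_algebra zify.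
Import Order.TTheory GRing.Theory Num.Theory.

Set Implicit Arguments.
Unset Strict Implicit.
Unset Printing Implicit Defensive.

(* Let w(tau) = B_tau / tau! and a_n be the sum of w(tau) over the monomials
   of degree n.  We show that A(x) = sum_n a_n x^n is log(1 + x).
   1. Combinatorics.  A monomial tau = (...((x tau_1) tau_2)...) tau_k has
      w(tau) = B_k/k! * w(tau_1)...w(tau_k).  Splitting monomials according
      to the length k of their left spine yields A = x * P(A), where
      P(y) = sum_k B_k y^k / k!.
   2. Such a fixed-point equation A = x * F(A) has at most one solution,
      since its degree-i coefficient only involves coefficients of A of
      degree < i.
   3. Analysis.  L = log(1 + x) satisfies e^L = 1 + x (via the differential
      equation (1 + x) E' = E), hence L * Q(L) = x for Q(y) = (e^y - 1)/y.
      The recursion defining the Bernoulli numbers says P * Q = 1, hence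
      L = L * P(L) * Q(L) = x * P(L), and A = L by 2.
   Power series are represented by polynomials compared modulo x^m. *)

Fixpoint height (t : tree) : nat :=
  if t is Node a b then (maxn (height a) (height b)).+1 else 1.

Lemma mem_trees fuel t : (t \in trees fuel) = (height t <= fuel).
Proof.
elim: fuel t => [|fuel IH] [|a b] //=; rewrite in_cons /=.
apply/allpairsP/idP => [[[x y]] /= [xi yi [-> ->]]|].
  by rewrite ltnS geq_max -!IH xi yi.
by rewrite ltnS geq_max -!IH => /andP[ai bi]; exists (a, b).
Qed.

Lemma deg_gt0 t : 0 < deg t.
Proof. by elim: t => //= a IHa b _; rewrite addn_gt0 IHa. Qed.

Lemma height_le_deg t : height t <= deg t.
Proof.
elim: t => //= a IHa b IHb; rewrite gtn_max; apply/andP.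
have := deg_gt0 a; have := deg_gt0 b; lia.
Qed.

Lemma mem_trees_of_deg n t : (t \in trees_of_deg n) = (deg t == n).
Proof.
rewrite mem_filter mem_undup mem_trees.
by case: eqP => // <-; rewrite height_le_deg.
Qed.

Lemma uniq_trees_of_deg n : uniq (trees_of_deg n).
Proof. by rewrite filter_uniq ?undup_uniq. Qed.

Lemma trees_of_deg0 : trees_of_deg 0 = [::].
Proof. by []. Qed.

Lemma trees_of_deg1 : trees_of_deg 1 = [:: Leaf].
Proof. by []. Qed.

Section SumsOverMonomials.
Variable R : nmodType.
Local Open Scope ring_scope.

Lemma big_trees_of_deg n (s : seq tree) (F : tree -> R) :
  uniq s -> (forall t, deg t = n -> t \in s) ->
  \sum_(t <- trees_of_deg n) F t = \sum_(t <- s | deg t == n) F t.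
Proof.
move=> s_uniq s_full; rewrite -[RHS]big_filter; apply: perm_big; apply: uniq_perm.
- exact: uniq_trees_of_deg.
- exact: filter_uniq.
by move=> t; rewrite mem_trees_of_deg mem_filter; case: eqP => // /s_full ->.
Qed.

Lemma big_deg_partition n (s : seq tree) (G : nat -> tree -> R) :
  uniq s -> (forall t, (deg t < n)%N -> t \in s) ->
  \sum_(j < n) \sum_(a <- trees_of_deg j) G j a =
  \sum_(a <- s | (deg a < n)%N) G (deg a) a.
Proof.
move=> s_uniq s_full.
have s_full_j (j : 'I_n) t : deg t = j -> t \in s by move=> e; rewrite s_full ?e.
under eq_bigr => j _ do rewrite (big_trees_of_deg _ s_uniq (s_full_j j)) big_mkcond.
rewrite exchange_big [RHS]big_mkcond /=; apply: eq_bigr => a _.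
rewrite -big_mkcondr -(big_ord1_eq +%R (fun j => G j a)).
by apply: eq_bigl => j; rewrite eq_sym.
Qed.

Lemma big_trees_of_deg_split n (F : tree -> R) : (1 < n)%N ->
  \sum_(t <- trees_of_deg n) F t =
  \sum_(j < n) \sum_(a <- trees_of_deg j) \sum_(b <- trees_of_deg (n - j)) F (Node a b).
Proof.
move=> n_gt1; set M := undup (trees n).
have M_uniq : uniq M := undup_uniq _.
have M_full t : (deg t <= n)%N -> t \in M.
  by move=> le_tn; rewrite mem_undup mem_trees (leq_trans (height_le_deg t)).
rewrite (big_trees_of_deg (s := Leaf :: [seq Node a b | a <- M, b <- M])); first last.
- case=> [/= n1|a b /= e]; first by rewrite -n1 in n_gt1.
  by apply/allpairsP; exists (a, b); rewrite !M_full -?e ?leq_addr ?leq_addl.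
- rewrite /= allpairs_uniq ?andbT //; last by move=> [? ?] [? ?] _ _ [-> ->].
  by apply/allpairsP => -[[? ?] []].
rewrite big_cons /= ltn_eqF // big_mkcond big_allpairs_dep.
rewrite (big_deg_partition (fun j a => \sum_(b <- trees_of_deg (n - j)) F (Node a b)) M_uniq);
  last by move=> t /ltnW /M_full.
rewrite [RHS]big_mkcond; apply: eq_bigr => a _; case: ltnP => [lt_an|le_na].
  have M_full_b b : deg b = (n - deg a)%N -> b \in M by move=> e; rewrite M_full ?e ?leq_subr.
  rewrite (big_trees_of_deg _ M_uniq M_full_b) [RHS]big_mkcond.
  by apply: eq_bigr => b _ /=; rewrite -{1}(subnKC (ltnW lt_an)) eqn_add2l.
by apply: big1 => b _; rewrite ifN // [deg _]/=; have := deg_gt0 b; lia.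
Qed.
End SumsOverMonomials.

Local Open Scope ring_scope.

Fixpoint prod_B (B : nat -> rat) (t : tree) : rat :=
  if t is Node a b then prod_B B a * (B (size (spine b)) * prod_B B b) else 1.

Fixpoint prod_fact (t : tree) : nat :=
  if t is Node a b then (prod_fact a * ((size (spine b))`! * prod_fact b))%N else 1%N.

Lemma size_spine_Node a b : size (spine (Node a b)) = (size (spine a)).+1.
Proof. exact: size_rcons. Qed.

Lemma info_spec B t : info B t = (size (spine t), prod_B B t, prod_fact t).
Proof. by elim: t => //= a -> b ->; rewrite size_rcons. Qed.

Lemma size_spine_lt_deg t : (size (spine t) < deg t)%N.
Proof. by elim: t => //= a IHa b _; rewrite size_rcons; have := deg_gt0 b; lia. Qed.

Section Weights.
Variable B : nat -> rat.

Definition weight (t : tree) : rat := Btau B t / (tfact t)%:R.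

Definition spine_weight (t : tree) : rat := prod_B B t / (prod_fact t)%:R.

Lemma weightE t :
  weight t = B (size (spine t)) / (size (spine t))`!%:R * spine_weight t.
Proof.
rewrite /weight /Btau /tfact /spine_weight !info_spec natrM invfM.
by rewrite mulrACA.
Qed.

Lemma spine_weight_Node a b : spine_weight (Node a b) = spine_weight a * weight b.
Proof.
rewrite weightE /spine_weight /= !natrM !invfM.
by rewrite mulrACA [X in _ * X = _]mulrACA.
Qed.

Definition wsum (n : nat) : rat := \sum_(t <- trees_of_deg n) weight t.

(* The coefficient of x^n in x * A(x)^k: the monomials of degree n with a
   spine of length k, weighted by their spine weight. *)
Definition spine_sum (n k : nat) : rat :=
  \sum_(t <- trees_of_deg n | size (spine t) == k) spine_weight t.

Lemma wsum_by_spine n : wsum n = \sum_(k < n) B k / k`!%:R * spine_sum n k.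
Proof.
under [RHS]eq_bigr do rewrite big_distrr /= big_mkcond.
rewrite exchange_big /= /wsum big_seq [RHS]big_seq; apply: eq_bigr => t.
rewrite mem_trees_of_deg => /eqP <-; rewrite weightE.
rewrite -big_mkcondr (eq_bigl (fun k : 'I_(deg t) => k == size (spine t) :> nat)).
  by rewrite (big_ord1_eq _ (fun k => B k / k`!%:R * spine_weight t)) size_spine_lt_deg.
by move=> k; rewrite eq_sym.
Qed.

Lemma spine_sum0 n : spine_sum n 0 = (n == 1%N)%:R.
Proof.
rewrite /spine_sum; case: n => [|[|n]].
- by rewrite trees_of_deg0 big_nil.
- by rewrite trees_of_deg1 big_cons big_nil /spine_weight /= invr1 mulr1 addr0.
rewrite big_mkcond big_trees_of_deg_split //; apply: big1 => j _.
by apply: big1 => a _; apply: big1 => b _; rewrite size_spine_Node.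
Qed.

(* Removing the last spine factor tau_k: a convolution recursion in n. *)
Lemma spine_sumS n k :
  spine_sum n k.+1 = \sum_(j < n) spine_sum j k * wsum (n - j).
Proof.
case: n => [|[|n]].
- by rewrite /spine_sum trees_of_deg0 !big_nil big_ord0.
- by rewrite big_ord1 /spine_sum trees_of_deg0 trees_of_deg1 !big_cons !big_nil mul0r.
rewrite /spine_sum big_mkcond big_trees_of_deg_split //; apply: eq_bigr => j _.
rewrite big_distrl [RHS]big_mkcond; apply: eq_bigr => a _.
under eq_bigr do rewrite size_spine_Node eqSS.
case: eqP => _; last by rewrite big1.
by rewrite /wsum big_distrr; apply: eq_bigr => b _; rewrite spine_weight_Node.
Qed.
End Weights.

Section Truncation.
Variable R : comNzRingType.
Implicit Types p q F G : {poly R}.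

Definition eqmodX (m : nat) p q : Prop := forall i, (i < m)%N -> p`_i = q`_i.

Lemma eqmodX_refl m p : eqmodX m p p.
Proof. by []. Qed.

Lemma eqmodX_mul m p p' q q' :
  eqmodX m p p' -> eqmodX m q q' -> eqmodX m (p * q) (p' * q').
Proof.
move=> epp eqq i lt_im; rewrite !coefM; apply: eq_bigr => j _.
by have lt_ji := ltn_ord j; rewrite epp ?eqq //; lia.
Qed.

Lemma eqmodX_exp m p q k : eqmodX m p q -> eqmodX m (p ^+ k) (q ^+ k).
Proof.
move=> epq; elim: k => [|k IHk] i lt_im; first by [].
by rewrite !exprS (eqmodX_mul epq IHk).
Qed.

Lemma eqmodX_compr m F p q : eqmodX m p q -> eqmodX m (F \Po p) (F \Po q).
Proof.
move=> epq i lt_im; rewrite !comp_polyE !coef_sum; apply: eq_bigr => k _.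
by rewrite !coefZ (eqmodX_exp _ epq).
Qed.

Lemma eqmodX_mulX m p q : eqmodX m p q -> eqmodX m.+1 ('X * p) ('X * q).
Proof. by move=> epq [|i] lt_im; rewrite !coefXM //= epq. Qed.

Lemma coef_mulX_exp_low p q k i : (i < k)%N -> (('X * p) ^+ k * q)`_i = 0.
Proof. by move=> lt_ik; rewrite exprMn -mulrA coefXnM lt_ik. Qed.

Lemma coef_comp_mulX F p i :
  (F \Po ('X * p))`_i = \sum_(k < i.+1) F`_k * (('X * p) ^+ k)`_i.
Proof.
rewrite comp_polyE coef_sum; under eq_bigr do rewrite coefZ.
pose T k := F`_k * (('X * p) ^+ k)`_i.
have Fhigh k : (size F <= k)%N -> T k = 0 by move=> ?; rewrite /T nth_default ?mul0r.
have phigh k : (i.+1 <= k)%N -> T k = 0.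
  by move=> ?; rewrite /T -[_ ^+ k]mulr1 coef_mulX_exp_low ?mulr0.
transitivity (\sum_(k < maxn (size F) i.+1) T k).
  rewrite (big_ord_widen _ T (leq_maxl (size F) i.+1)) big_mkcond.
  by apply: eq_bigr => k _; case: ltnP => [_|/Fhigh ->].
rewrite (big_ord_widen _ T (leq_maxr (size F) i.+1)) [RHS]big_mkcond.
by apply: eq_bigr => k _; case: ltnP => [_|/phigh ->].
Qed.

Lemma eqmodX_compl m F G p :
  eqmodX m F G -> eqmodX m (F \Po ('X * p)) (G \Po ('X * p)).
Proof.
move=> eFG i lt_im; rewrite !coef_comp_mulX; apply: eq_bigr => k _.
by have lt_ki := ltn_ord k; rewrite eFG //; lia.
Qed.

Lemma mulX_fixed_point_unique m F p q :
  eqmodX m p (F \Po ('X * p)) -> eqmodX m q (F \Po ('X * q)) -> eqmodX m p q.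
Proof.
move=> fix_p fix_q; suff: forall i, (i <= m)%N -> eqmodX i p q by apply.
elim=> [|i IHi] le_im j lt_ji //.
have eFpq := eqmodX_compr F (eqmodX_mulX (IHi (ltnW le_im))).
have lt_jm : (j < m)%N by apply: leq_trans le_im.
by rewrite fix_p ?fix_q ?eFpq.
Qed.

Lemma coef_mul1X_deriv p i :
  ((1 + 'X) * p^`())`_i = p`_i.+1 *+ i.+1 + p`_i *+ i.
Proof.
by rewrite mulrDl mul1r coefD coefXM !coef_deriv; case: i => [|i]; rewrite ?mulr0n.
Qed.
End Truncation.

Section WeightSeries.
Variables (B : nat -> rat) (N : nat).

Definition bernoulli_egf (m : nat) : {poly rat} := \poly_(k < m) (B k / k`!%:R).

(* A(x) / x modulo x^N. *)
Definition wsum_series : {poly rat} := \poly_(i < N) wsum B i.+1.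

Lemma coef_mulX_wsum_series m : (m <= N)%N -> ('X * wsum_series)`_m = wsum B m.
Proof.
case: m => [_|m lt_mN]; first by rewrite coefXM /wsum trees_of_deg0 big_nil.
by rewrite coefXM coef_poly lt_mN.
Qed.

Lemma spine_sum_coef k m :
  (m <= N)%N -> spine_sum B m k = ('X * ('X * wsum_series) ^+ k)`_m.
Proof.
elim: k m => [|k IHk] m le_mN; first by rewrite spine_sum0 expr0 mulr1 coefX.
rewrite spine_sumS exprSr mulrA coefM big_ord_recr /= subnn [('X * _)`_0]coefXM mulr0 addr0.
apply: eq_bigr => j _; have lt_jm := ltn_ord j.
by rewrite IHk ?coef_mulX_wsum_series //; lia.
Qed.

Lemma wsum_fixed_point :
  eqmodX N wsum_series (bernoulli_egf N.+1 \Po ('X * wsum_series)).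
Proof.
move=> i lt_iN; rewrite coef_poly lt_iN wsum_by_spine coef_comp_mulX.
apply: eq_bigr => k _; have lt_kN : (k < N.+1)%N by have := ltn_ord k; lia.
by rewrite coef_poly lt_kN spine_sum_coef ?coefXM.
Qed.
End WeightSeries.

Section ExpLog.
Variable R : numFieldType.
Implicit Types p E : {poly R}.

Lemma natrS_neq0 k : k.+1%:R != 0 :> R.
Proof. by rewrite pnatr_eq0. Qed.

Lemma invfact_succ k : ((k.+1)`!%:R)^-1 * k.+1%:R = (k`!%:R)^-1 :> R.
Proof. by rewrite factS natrM invfM mulrAC mulVf ?mul1r ?natrS_neq0. Qed.

Definition expt (m : nat) p : {poly R} := \sum_(j < m) (j`!%:R)^-1 *: p ^+ j.

Lemma deriv_expt m p : (expt m.+1 p)^`() = p^`() * expt m p.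
Proof.
rewrite /expt raddf_sum big_ord_recl /= expr0 -polyC1 derivZ derivC scaler0 add0r.
rewrite mulr_sumr; apply: eq_bigr => j _.
by rewrite derivZ deriv_exp -scaler_nat scalerA invfact_succ -scalerAr.
Qed.

Lemma expt_mulX_succ M m p :
  (M <= m)%N -> eqmodX M (expt m ('X * p)) (expt m.+1 ('X * p)).
Proof.
move=> le_Mm i lt_iM; rewrite /expt big_ord_recr coefD coefZ /=.
by rewrite -[_ ^+ m]mulr1 coef_mulX_exp_low ?mulr0 ?addr0 //; apply: leq_trans le_Mm.
Qed.

Lemma ode_exp_solution m E :
  E`_0 = 1 -> eqmodX m ((1 + 'X) * E^`()) E -> eqmodX m.+1 E (1 + 'X).
Proof.
move=> E0 ode; elim=> [|i IHi] lt_im; first by rewrite E0 coefD coef1 coefX addr0.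
have := ode i lt_im; rewrite coef_mul1X_deriv IHi 1?ltnW // !coefD !coef1 !coefX.
have nat_eq0 (x : R) k : x *+ k.+1 = 0 -> x = 0 by move/eqP; rewrite mulrn_eq0 /= => /eqP.
case: i {IHi lt_im} => [|[|i]] /=; rewrite !(addr0, add0r).
- by rewrite mulr1n.
- by rewrite mulr1n => /(canRL (addrK 1)); rewrite subrr => /nat_eq0.
by rewrite mul0rn addr0 => /nat_eq0.
Qed.

Variable N : nat.

(* log(1 + x) / x = sum_j (-1)^j x^j / (j + 1), truncated in degree N. *)
Definition log1p_div : {poly R} := \poly_(j < N) ((-1) ^+ j / j.+1%:R).

Lemma coef_mulX_log1p_div i :
  (i < N)%N -> ('X * log1p_div)`_i.+1 *+ i.+1 = (-1) ^+ i.
Proof.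
move=> lt_iN; rewrite coefXM /= coef_poly lt_iN.
by rewrite -(mulr_natr ((-1) ^+ i / _)) divfK ?natrS_neq0.
Qed.

Lemma log1p_deriv : eqmodX N ((1 + 'X) * ('X * log1p_div)^`()) 1.
Proof.
move=> i lt_iN; rewrite coef_mul1X_deriv coef_mulX_log1p_div // coef1.
case: i lt_iN => [|i] lt_iN; first by rewrite coefXM mulr0n addr0.
by rewrite coef_mulX_log1p_div 1?ltnW // exprS mulN1r addNr.
Qed.

Lemma exp_log1p : eqmodX N.+1 (expt N.+2 ('X * log1p_div)) (1 + 'X).
Proof.
apply: ode_exp_solution => [|i lt_iN].
  rewrite coef_sum big_ord_recl big1 => [|j _]; last first.
    by rewrite coefZ -[_ ^+ _]mulr1 coef_mulX_exp_low ?mulr0.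
  by rewrite addr0 expr0 coefZ coef1 /= invr1 mulr1.
rewrite deriv_expt mulrA (eqmodX_mul log1p_deriv (expt_mulX_succ _ (leqnSn N))) //.
by rewrite mul1r.
Qed.

(* Q(y) = (e^y - 1) / y = sum_j y^j / (j + 1)!, truncated in degree m. *)
Definition expm1_div (m : nat) : {poly R} := \poly_(j < m) ((j.+1)`!%:R)^-1.

Lemma mul_comp_expm1_div m p : p * (expm1_div m \Po p) = expt m.+1 p - 1.
Proof.
rewrite /expm1_div poly_def linear_sum /= mulr_sumr /expt big_ord_recl /=.
rewrite expr0 fact0 invr1 scale1r addrC addKr; apply: eq_bigr => j _.
by rewrite comp_polyZ comp_Xn_poly -scalerAr -exprS.
Qed.

Lemma log1p_expm1 :
  eqmodX N.+1 ('X * log1p_div * (expm1_div N.+1 \Po ('X * log1p_div))) 'X.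
Proof.
by move=> i lt_iN; rewrite mul_comp_expm1_div coefB exp_log1p // coefD addrC addKr.
Qed.
End ExpLog.

Section Bernoulli.
Variable B : nat -> rat.
Hypothesis B0 : B 0%N = 1.
Hypothesis Brec : forall n : nat, (2 <= n)%N ->
  \sum_(k < n) B k / ((k`!)%:R * ((n - k)`!)%:R) = 0.

Lemma bernoulli_egf_inverse m : eqmodX m (bernoulli_egf B m * expm1_div rat m) 1.
Proof.
move=> s lt_sm; rewrite coefM coef1.
transitivity (\sum_(j < s.+1) B j / (j`!%:R * ((s.+1 - j)`!)%:R)).
  apply: eq_bigr => j _; have le_js : (j <= s)%N by rewrite -ltnS.
  rewrite !coef_poly (leq_ltn_trans le_js lt_sm) (leq_ltn_trans (leq_subr j s) lt_sm).
  by rewrite subSn // invfM mulrA.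
by case: s {lt_sm} => [|s]; rewrite ?big_ord1 /= ?B0 ?mul1r ?invr1 // Brec.
Qed.

Lemma log1p_fixed_point N :
  eqmodX N (log1p_div rat N) (bernoulli_egf B N.+1 \Po ('X * log1p_div rat N)).
Proof.
set L := 'X * log1p_div rat N.
set P := bernoulli_egf B N.+1 \Po L; set Q := expm1_div rat N.+1 \Po L.
have PQ1 : eqmodX N.+1 (P * Q) 1.
  have := eqmodX_compl (log1p_div rat N) (bernoulli_egf_inverse (m := N.+1)).
  by rewrite -polyC1 comp_polyC comp_polyM.
move=> i lt_iN; have lt_iN1 : (i.+1 < N.+1)%N by [].
have := eqmodX_mul (eqmodX_refl L) PQ1 lt_iN1.
rewrite mulr1 coefXM /= => <-.
rewrite mulrCA (eqmodX_mul (eqmodX_refl P) (@log1p_expm1 rat N)) //.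
by rewrite coefMX.
Qed.
End Bernoulli.

Theorem mainTheorem19 (B : nat -> rat)
    (hB0 : B 0%N = 1)
    (hBrec : forall n : nat, (2 <= n)%N ->
       \sum_(k < n) B k / ((k`!)%:R * ((n - k)`!)%:R) = 0)
    (n : nat) (hn : (1 <= n)%N) :
  \sum_(t <- trees_of_deg n) Btau B t / (tfact t)%:R = (-1) ^+ n.+1 / n%:R.
Proof.
have A_eq_L := mulX_fixed_point_unique (wsum_fixed_point B (N := n))
  (log1p_fixed_point hB0 hBrec (N := n)).
case: n hn A_eq_L => // m _ A_eq_L.
have := A_eq_L m (ltnSn m); rewrite !coef_poly ltnSn /wsum /weight => ->.
by rewrite !exprS mulN1r mulN1r opprK.
Qed.
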